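(* Let $k \geq 1$ be an integer. Let $F_1$ and $F_2$ be two anonymized fragments of a relation over a common class attribute, each a finite multiset of tuples of the form $(q, c)$, where $q$ is a (generalized) quasi-identifier value of that fragment and $c$ is a class value. Partition $F_1$ into equivalence classes $EQ_{11}, \dots, EQ_{1n}$ and $F_2$ into equivalence classes $EQ_{21}, \dots, EQ_{2m}$, where an equivalence class is the set of all tuples of the fragment sharing the same quasi-identifier value, and assume each fragment satisfies $k$-anonymity, i.e. $|EQ_{1i}| \geq k$ and $|EQ_{2j}| \geq k$ for all $i,j$. For an equivalence class $EQ$ let $C(EQ)$ denote the set of class values occurring in it and $freq(c, EQ)$ the number of tuples in $EQ$ with class value $c$; write $C_{1i} = C(EQ_{1i})$ and $C_{2j} = C(EQ_{2j})$. Then the fragmentation $\{F_1, F_2\}$ is $k$-anonymity non-reconstructible (i.e. the relation $F_1 \Join F_2$ obtained by joining the two fragments on the class attribute satisfies $k$-anonymity) if and only if for every pair $(i,j)$ one of the following holds: (1) $\sum_{c \in C_{1i} \cap C_{2j}} freq(c, EQ_{1i}) \cdot freq(c, EQ_{2j}) = 0$, or (2) $\sum_{c \in C_{1i} \cap C_{2j}} freq(c, EQ_{1i}) \cdot freq(c, EQ_{2j}) \geq k$.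
   Context: The join $F_1 \Join F_2$ on the class attribute is the multiset of tuples $(q_1, q_2, c)$ obtained from every pair of tuples $(q_1, c) \in F_1$ and $(q_2, c) \in F_2$ having the same class value $c$ (counted with multiplicity). A multiset of tuples satisfies $k$-anonymity if every equivalence class (maximal set of tuples sharing the same quasi-identifier values, here the same pair $(q_1,q_2)$) that is nonempty contains at least $k$ tuples. A fragmentation $\{F_1, F_2\}$ in which each fragment is $k$-anonymous is called $k$-anonymity non-reconstructible if the relation resulting from joining its fragments on the class attribute satisfies $k$-anonymity. *)

From mathcomp Require Import all_boot.
Set Implicit Arguments. Unset Strict Implicit. Unset Printing Implicit Defensive.

(* A fragment is a finite multiset of tuples (q, c), represented as a seq
   (order irrelevant, multiplicities counted). *)

Definition eqclass (Q C : eqType) (F : seq (Q * C)) (q : Q) : seq (Q * C) :=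
  [seq t <- F | t.1 == q].

Definition k_anonymous (Q C : eqType) (k : nat) (F : seq (Q * C)) : Prop :=
  forall q, q \in [seq t.1 | t <- F] -> k <= size (eqclass F q).

Definition join (Q1 Q2 C : eqType) (F1 : seq (Q1 * C)) (F2 : seq (Q2 * C))
  : seq ((Q1 * Q2) * C) :=
  [seq ((t1.1, t2.1), t1.2) | t1 <- F1, t2 <- [seq t <- F2 | t.2 == t1.2]].

Definition k_anon_nonreconstructible (Q1 Q2 C : eqType) (k : nat)
  (F1 : seq (Q1 * C)) (F2 : seq (Q2 * C)) : Prop :=
  [/\ k_anonymous k F1, k_anonymous k F2 & k_anonymous k (join F1 F2)].

Definition classes (Q C : eqType) (EQ : seq (Q * C)) : seq C :=
  undup [seq t.2 | t <- EQ].

Definition freq (Q C : eqType) (c : C) (EQ : seq (Q * C)) : nat :=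
  count (fun t => t.2 == c) EQ.

Definition pair_weight (Q1 Q2 C : eqType) (EQ1 : seq (Q1 * C)) (EQ2 : seq (Q2 * C)) : nat :=
  \sum_(c <- classes EQ1 | c \in classes EQ2) freq c EQ1 * freq c EQ2.

From mathcomp Require Import all_boot.

(* The equivalence class of (q1, q2) in the join consists of one tuple for each
   t1 in EQ_1(q1) and each tuple of EQ_2(q2) with class t1.2, so its size is
   \sum_(t1 in EQ_1(q1)) freq t1.2 EQ_2(q2), which is the pair weight after
   grouping the t1 by class value.  A pair (q1, q2) occurs in the join exactly
   when this weight is positive, so k-anonymity of the join says precisely that
   every pair weight is 0 or at least k. *)

Lemma sum_undup_count (I : eqType) (r : seq I) (F : I -> nat) :
  \sum_(i <- r) F i = \sum_(i <- undup r) count_mem i r * F i.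
Proof.
rewrite -(big_undup_iterop_count addn r xpredT F).
by apply: eq_bigr => i _; rewrite Monoid.iteropE iter_addn_0 mulnC.
Qed.

Lemma mem_map_fst_eqclass (Q C : eqType) (F : seq (Q * C)) (q : Q) :
  (q \in [seq t.1 | t <- F]) = (0 < size (eqclass F q)).
Proof.
rewrite /eqclass size_filter -has_count.
by apply/mapP/hasP => [[t tF ->]|[t tF /eqP <-]]; exists t.
Qed.

Lemma size_eqclass_join (Q1 Q2 C : eqType) (F1 : seq (Q1 * C)) (F2 : seq (Q2 * C))
    (q1 : Q1) (q2 : Q2) :
  size (eqclass (join F1 F2) (q1, q2)) =
  \sum_(t1 <- eqclass F1 q1) freq t1.2 (eqclass F2 q2).
Proof.
rewrite /eqclass size_filter big_filter.
elim: F1 => [|t1 F1 IH]; first by rewrite big_nil.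
rewrite big_cons -IH /join /= count_cat count_map count_filter /freq count_filter.
case: eqP => [->|t1_neq] /=.
  by congr (_ + _); apply: eq_count => t2 /=; rewrite xpair_eqE eqxx andbC.
rewrite (eq_count (a2 := pred0)) ?count_pred0 // => t2 /=.
by rewrite xpair_eqE; case: eqP => //= t1_eq; rewrite t1_eq eqxx in t1_neq.
Qed.

Lemma pair_weightE (Q1 Q2 C : eqType) (E1 : seq (Q1 * C)) (E2 : seq (Q2 * C)) :
  pair_weight E1 E2 = \sum_(t1 <- E1) freq t1.2 E2.
Proof.
rewrite /pair_weight -(big_map snd xpredT (fun c => freq c E2)) sum_undup_count.
rewrite big_mkcond /=; apply: eq_bigr => c _; rewrite /freq count_map.
case: ifP => // /negbT c_notin; rewrite -[count _ E2]/(freq c E2).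
suff -> : freq c E2 = 0 by rewrite muln0.
apply/eqP; rewrite -leqn0 leqNgt -has_count; apply/hasP => -[t tE2 /eqP tc].
by move: c_notin; rewrite /classes mem_undup -tc map_f.
Qed.

Lemma size_eqclass_join_weight (Q1 Q2 C : eqType)
    (F1 : seq (Q1 * C)) (F2 : seq (Q2 * C)) (q1 : Q1) (q2 : Q2) :
  size (eqclass (join F1 F2) (q1, q2)) = pair_weight (eqclass F1 q1) (eqclass F2 q2).
Proof. by rewrite size_eqclass_join pair_weightE. Qed.

Lemma pair_weight_gt0 {Q1 Q2 C : eqType} {E1 : seq (Q1 * C)} {E2 : seq (Q2 * C)} :
  0 < pair_weight E1 E2 -> 0 < size E1 /\ 0 < size E2.
Proof.
rewrite pair_weightE; case: E1 => [|t1 E1]; first by rewrite big_nil.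
by case: E2 => [|t2 E2] //; rewrite big1.
Qed.

Theorem theorem4p1 (Q1 Q2 C : eqType) (k : nat)
  (F1 : seq (Q1 * C)) (F2 : seq (Q2 * C)) :
  1 <= k -> k_anonymous k F1 -> k_anonymous k F2 ->
  (k_anon_nonreconstructible k F1 F2 <->
   forall q1 q2, q1 \in [seq t.1 | t <- F1] -> q2 \in [seq t.1 | t <- F2] ->
     pair_weight (eqclass F1 q1) (eqclass F2 q2) = 0 \/
     k <= pair_weight (eqclass F1 q1) (eqclass F2 q2)).
Proof.
move=> _ anon1 anon2; split.
  case=> _ _ anonJ q1 q2 _ _.
  have := anonJ (q1, q2); rewrite mem_map_fst_eqclass size_eqclass_join_weight.
  case: (posnP (pair_weight _ _)) => [|_] anon_q; first by left.
  by right; apply: anon_q.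
move=> weight_cases; split=> // -[q1 q2].
rewrite mem_map_fst_eqclass size_eqclass_join_weight => w_gt0.
have [nonempty1 nonempty2] := pair_weight_gt0 w_gt0.
rewrite -!mem_map_fst_eqclass in nonempty1 nonempty2.
by case: (weight_cases q1 q2 nonempty1 nonempty2) => // w0; rewrite w0 in w_gt0.
Qed.
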